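(* Let $f(x)=\sum_{i=0}^{n-1}a_ix^{q^i}\in\mathbb{F}_{q^n}[x]$ and let $A$ be its Dickson matrix. If $A$ is reducible, then $f$ is $\mathbb{F}_{q^d}$-linear for some divisor $d>1$ of $n$.
   Context: The Dickson matrix of $f$ is the $n\times n$ matrix indexed by $\mathbb{Z}_n$ with $A[i|j]=a_{j-i}^{q^i}$ (indices mod $n$). An $n\times n$ matrix $A$ is reducible if there is a partition $\{\alpha,\beta\}$ of $\mathbb{Z}_n$ into nonempty sets with $A[\alpha|\beta]$ the zero matrix ($A[\alpha|\beta]$ = submatrix with rows $\alpha$, columns $\beta$). *)

From HB Require Import structures.
From mathcomp Require Import all_boot all_order all_algebra all_field.
Set Implicit Arguments. Unset Strict Implicit. Unset Printing Implicit Defensive.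
Import GRing.Theory.
Local Open Scope ring_scope.

(* Indices in Z_n are represented by 'I_n; subtraction mod n. *)
Lemma ord_gt0 n (i : 'I_n) : (0 < n)%N.
Proof. exact: leq_ltn_trans (leq0n i) (ltn_ord i). Qed.

Definition ord_sub n (j i : 'I_n) : 'I_n :=
  Ordinal (ltn_pmod (j + (n - i))%N (ord_gt0 i)).

Definition linpoly_fun (F : fieldType) (q n : nat) (a : 'I_n -> F) (x : F) : F :=
  \sum_(i < n) a i * x ^+ (q ^ i).

Definition dickson_mx (F : fieldType) (q n : nat) (a : 'I_n -> F) : 'M[F]_n :=
  \matrix_(i < n, j < n) (a (ord_sub j i)) ^+ (q ^ i).

Definition reducible_mx (F : fieldType) n (A : 'M[F]_n) : Prop :=
  exists alpha beta : {set 'I_n},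
    [/\ alpha != set0, beta != set0, alpha :&: beta = set0,
        alpha :|: beta = setT &
        forall i j, i \in alpha -> j \in beta -> A i j = 0].

Definition subfield_q (F : fieldType) (q d : nat) (lam : F) : Prop :=
  lam ^+ (q ^ d) = lam.

Definition Fqd_linear (F : fieldType) (q d : nat) (f : F -> F) : Prop :=
  forall lam x, subfield_q q d lam -> f (lam * x) = lam * f x.

From HB Require Import structures.
From mathcomp Require Import all_boot all_order all_algebra all_field.
From mathcomp Require Import zify.
Set Implicit Arguments. Unset Strict Implicit. Unset Printing Implicit Defensive.
Import GRing.Theory.
Local Open Scope ring_scope.

(* If A[alpha|beta] = 0 and a_k != 0, then i in alpha forces i + k in alpha,
   because A[i|i+k] = a_k^(q^i) != 0.  So every such k lies in the set of
   shifts m with alpha + m <= alpha.  That set is closed under addition and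
   periodic mod n, hence it is exactly the set of multiples of some d | n,
   and d > 1 because alpha is a proper nonempty subset of Z_n.  Finally
   lam^(q^k) = lam for lam in F_(q^d) and d | k, which gives the
   F_(q^d)-linearity of f term by term. *)

Lemma addn_closed_periodic_dvdn (P : pred nat) (n : nat) :
  (0 < n)%N -> P 0%N -> (forall x y, P x -> P y -> P (x + y)%N) ->
  (forall m, P (m + n)%N = P m) ->
  exists d, forall m, P m = (d %| m)%N.
Proof.
move=> n_gt0 P0 PD Pn.
have PM c x : P x -> P (c * x)%N.
  by move=> Px; elim: c => [|c IH]; rewrite ?mul0n // mulSn PD.
have Pnn c m : P (m + c * n)%N = P m.
  by elim: c => [|c IH]; rewrite ?muln0 ?addn0 // mulSn addnCA addnC Pn.
have exP : exists m, (0 < m)%N && P m by exists n; rewrite n_gt0 -[n]add0n Pn.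
have [d /andP [d_gt0 Pd] d_min] := ex_minnP exP.
exists d => m; apply/idP/idP; last by case/dvdnP=> c ->; exact: PM.
move=> Pm; apply: contraT => ndvd_dm.
have Pr : P (m %% d)%N.
  (* periodicity turns r into r + (m/d) d n, which is m plus a multiple of d *)
  have E : (m %% d + m %/ d * d * n = m + m %/ d * n.-1 * d)%N.
    have := divn_eq m d; have := prednK n_gt0.
    move: (m %/ d)%N (m %% d)%N n.-1 => c r n' <- ->; nia.
  by rewrite -(Pnn (m %/ d * d)%N) E PD // PM.
have : (d <= m %% d)%N by apply: d_min; rewrite lt0n Pr andbT.
by rewrite leqNgt ltn_pmod.
Qed.

Lemma subfield_q_dvdn (F : fieldType) (q d k : nat) (lam : F) :
  (d %| k)%N -> subfield_q q d lam -> subfield_q q k lam.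
Proof.
case/dvdnP=> c -> lam_d; rewrite /subfield_q.
by elim: c => [|c IH]; rewrite ?mul0n ?expn0 ?expr1 // mulSn expnD exprM lam_d.
Qed.

Lemma linpoly_fun_Fqd_linear (F : fieldType) (q n d : nat) (a : 'I_n -> F) :
  (forall k, a k != 0 -> (d %| k)%N) -> Fqd_linear q d (linpoly_fun q a).
Proof.
move=> supp_a lam x lam_d; rewrite /linpoly_fun mulr_sumr; apply: eq_bigr => k _.
have [->|ak] := eqVneq (a k) 0; first by rewrite !mul0r mulr0.
by rewrite exprMn (subfield_q_dvdn (supp_a k ak) lam_d) mulrCA mulrA.
Qed.

Section ShiftStable.

Variables (n : nat) (alpha : {set 'I_n}).

Definition shift_ord (i : 'I_n) (m : nat) : 'I_n :=
  Ordinal (ltn_pmod (i + m) (ord_gt0 i)).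

Definition shift_stable (m : nat) := [forall i in alpha, shift_ord i m \in alpha].

Lemma shift_stableP m :
  reflect (forall i, i \in alpha -> shift_ord i m \in alpha) (shift_stable m).
Proof. exact: forall_inP. Qed.

Lemma shift_ord0 i : shift_ord i 0 = i.
Proof. by apply: val_inj; rewrite /= addn0 modn_small. Qed.

Lemma shift_ordD i x y : shift_ord (shift_ord i x) y = shift_ord i (x + y).
Proof. by apply: val_inj; rewrite /= modnDml addnA. Qed.

Lemma shift_ord_periodic i m : shift_ord i (m + n) = shift_ord i m.
Proof. by apply: val_inj; rewrite /= addnA modnDr. Qed.

Lemma shift_ord_sub (i j : 'I_n) : shift_ord i (j + (n - i)) = j.
Proof.
apply: val_inj; rewrite /= addnCA subnKC; last exact: ltnW.
by rewrite modnDr modn_small.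
Qed.

Lemma ord_sub_shift (i k : 'I_n) : ord_sub (shift_ord i k) i = k.
Proof.
apply: val_inj; rewrite /= modnDml -addnA (addnC k) addnA subnKC; last exact: ltnW.
by rewrite modnDl modn_small.
Qed.

Lemma shift_stable0 : shift_stable 0.
Proof. by apply/shift_stableP => i; rewrite shift_ord0. Qed.

Lemma shift_stableD x y : shift_stable x -> shift_stable y -> shift_stable (x + y).
Proof.
move=> /shift_stableP sx /shift_stableP sy; apply/shift_stableP => i ai.
by rewrite -shift_ordD; apply/sy/sx.
Qed.

Lemma shift_stable_periodic m : shift_stable (m + n) = shift_stable m.
Proof. by apply: eq_forallb => i; rewrite shift_ord_periodic. Qed.

Lemma shift_stable_all_setT :
  (forall m, shift_stable m) -> alpha != set0 -> alpha = setT.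
Proof.
move=> stable_all /set0Pn [i ai]; apply/setP => j; rewrite inE.
by rewrite -(shift_ord_sub i j); apply: (elimT (shift_stableP _) (stable_all _)).
Qed.

End ShiftStable.

Lemma dickson_zero_block_shift_stable (F : fieldType) (q n : nat)
    (a : 'I_n -> F) (alpha beta : {set 'I_n}) :
  alpha :|: beta = setT ->
  (forall i j, i \in alpha -> j \in beta -> dickson_mx q a i j = 0) ->
  forall k, a k != 0 -> shift_stable alpha k.
Proof.
move=> cover zero_block k ak; apply/shift_stableP => i ai.
have : shift_ord i k \in alpha :|: beta by rewrite cover inE.
case/setUP=> // b_ik; move/eqP: (zero_block _ _ ai b_ik).
by rewrite mxE ord_sub_shift expf_eq0 (negbTE ak) andbF.
Qed.

Theorem mainTheorem8 (F : finFieldType) (q n : nat)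
  (hq : (1 < q)%N) (hn : (0 < n)%N) (hF : #|F| = (q ^ n)%N)
  (a : 'I_n -> F) :
  reducible_mx (dickson_mx q a) ->
  exists d : nat, [/\ (1 < d)%N, (d %| n)%N & Fqd_linear q d (linpoly_fun q a)].
Proof.
case=> alpha [beta [alpha0 beta0 disj cover zero_block]].
have [d stableE] := addn_closed_periodic_dvdn hn (shift_stable0 alpha)
  (@shift_stableD _ alpha) (shift_stable_periodic alpha).
have stable_n : shift_stable alpha n.
  by have := shift_stable_periodic alpha 0; rewrite add0n => ->; apply: shift_stable0.
exists d; split; last 2 first.
- by rewrite -stableE.
- apply: linpoly_fun_Fqd_linear => k ak; rewrite -stableE.
  exact: dickson_zero_block_shift_stable cover zero_block k ak.
case: d stableE => [|[|d]] stableE //.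
  by move: stable_n; rewrite stableE dvd0n eqn0Ngt hn.
have alphaT : alpha = setT by apply: shift_stable_all_setT => // m; rewrite stableE dvd1n.
by move: disj beta0; rewrite alphaT setTI => ->; rewrite eqxx.
Qed.
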